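(* Let $R$ be a commutative ring with identity and $M$ a non-zero comultiplication $R$-module with $G'(M)$ non-null and $|\mathrm{Min}(M)|<\infty$. Then the independence number of $G'(M)$ equals $|\mathrm{Min}(M)|$.
   Context: An $R$-module $M$ is a comultiplication module if for every submodule $N$ of $M$ there is an ideal $I$ of $R$ with $N=\mathrm{Ann}_M(I)$. A submodule $N$ of $M$ is large if $N\cap L\neq 0$ for every non-zero submodule $L$ of $M$. $\mathrm{Min}(M)$ is the set of minimal submodules of $M$. The large sum graph $G'(M)$ has as vertex set the set of all non-zero non-large submodules of $M$, and two distinct vertices $N,K$ are adjacent iff $N+K$ is non-large in $M$. The independence number $\alpha(G)$ is the maximum size of a set of pairwise non-adjacent vertices of $G$. *)

From HB Require Import structures.
From mathcomp Require Import all_boot all_order all_algebra.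
Set Implicit Arguments. Unset Strict Implicit. Unset Printing Implicit Defensive.
Import GRing.Theory.
Local Open Scope ring_scope.

Section ModDefs.
Variables (R : comNzRingType) (M : lmodType R).

Definition sub_eq (A B : M -> Prop) : Prop := forall x, A x <-> B x.

Definition is_submodule (N : M -> Prop) : Prop :=
  [/\ N 0, (forall x y, N x -> N y -> N (x + y))
    & (forall (r : R) x, N x -> N (r *: x))].

Definition is_ideal (I : R -> Prop) : Prop :=
  [/\ I 0, (forall a b, I a -> I b -> I (a + b))
    & (forall r a, I a -> I (r * a))].

Definition annM (I : R -> Prop) : M -> Prop :=
  fun m => forall r, I r -> r *: m = 0.

Definition comultiplication : Prop :=
  forall N, is_submodule N -> exists I, is_ideal I /\ sub_eq N (annM I).

Definition nonzero_sub (N : M -> Prop) : Prop := exists x, N x /\ x <> 0.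

Definition sub_sum (N K : M -> Prop) : M -> Prop :=
  fun m => exists x y, N x /\ K y /\ m = x + y.

Definition large (N : M -> Prop) : Prop :=
  forall L, is_submodule L -> nonzero_sub L ->
    exists x, N x /\ L x /\ x <> 0.

Definition minimal_submodule (N : M -> Prop) : Prop :=
  [/\ is_submodule N, nonzero_sub N &
    forall L, is_submodule L -> nonzero_sub L ->
      (forall x, L x -> N x) -> sub_eq L N].

(* Large sum graph G'(M) *)
Definition lsg_vertex (N : M -> Prop) : Prop :=
  [/\ is_submodule N, nonzero_sub N & ~ large N].

Definition lsg_adj (N K : M -> Prop) : Prop :=
  [/\ lsg_vertex N, lsg_vertex K, ~ sub_eq N K & ~ large (sub_sum N K)].

Definition lsg_nonnull : Prop := exists N K, lsg_adj N K.

Definition lsg_independent (k : nat) (f : 'I_k -> M -> Prop) : Prop :=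
  [/\ forall i, lsg_vertex (f i),
      (forall i j, i != j -> ~ sub_eq (f i) (f j))
    & (forall i j, ~ lsg_adj (f i) (f j))].

Definition lsg_independence_number_eq (n : nat) : Prop :=
  (exists f : 'I_n -> M -> Prop, lsg_independent f) /\
  (forall k (f : 'I_k -> M -> Prop), lsg_independent f -> (k <= n)%N).

Definition min_card_eq (n : nat) : Prop :=
  exists f : 'I_n -> M -> Prop,
    [/\ forall i, minimal_submodule (f i),
        (forall N, minimal_submodule N -> exists i, sub_eq N (f i))
      & (forall i j, sub_eq (f i) (f j) -> i = j)].

End ModDefs.

From HB Require Import structures.
From mathcomp Require Import all_boot all_order all_algebra.
From mathcomp Require Import boolp classical_sets.
Set Implicit Arguments. Unset Strict Implicit. Unset Printing Implicit Defensive.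
Import GRing.Theory.
Local Open Scope ring_scope.
Local Open Scope classical_set_scope.

(* In a comultiplication module every submodule N equals Ann_M(Ann_R(N)).
   Hence a nonzero submodule contains a minimal one (for x <> 0 and a maximal
   ideal m containing Ann(x), some i kills m x but not x, and R (i x) is
   simple), and a minimal submodule S inside N + K lies in N or in K, because
   Ann_R(S) is prime.  So a submodule is large iff it contains every minimal
   submodule.  Let Min(M) = {S_1, ..., S_n}.  Every vertex misses some S_i, and
   two non-adjacent vertices have a large sum, so they cannot miss the same
   S_i: this gives alpha <= n.  Conversely, let N_i be Ann_M of the elements
   killing every S_j with j <> i.  It contains those S_j but not S_i (a product
   of elements, each killing one S_j but not S_i, does not kill S_i); as G'(M)
   has an edge, n >= 2, so the N_i form an independent set of n vertices. *)

Section MaximalIdeals.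
Variable R : comNzRingType.

Definition maximal_ideal (m : R -> Prop) : Prop :=
  [/\ is_ideal m, ~ m 1 &
    forall m', is_ideal m' -> ~ m' 1 -> m `<=` m' -> m' `<=` m].

Lemma exists_maximal_ideal (J : R -> Prop) :
  is_ideal J -> ~ J 1 -> exists2 m, maximal_ideal m & J `<=` m.
Proof.
move=> Jid J1.
(* The union of the empty chain is empty, so [P] must allow the empty set. *)
pose P (I : R -> Prop) := I = set0 \/ [/\ is_ideal I, ~ I 1 & J `<=` I].
have [|A [PA Amax]] := @Zorn_bigcup _ P.
  move=> F FP Ftot; rewrite /P.
  have [[X FX [r Xr]]|F0] := pselect (exists2 X, F X & exists r, X r); last first.
    left; apply/seteqP; split=> // r [X FX Xr]; apply: F0; by exists X => //; exists r.
  have ideal_in_F : forall Y s, F Y -> Y s -> [/\ is_ideal Y, ~ Y 1 & J `<=` Y].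
    by move=> Y s FY Ys; case: (FP Y FY) => // Y0; rewrite Y0 in Ys.
  have [[X0 _ _] _ JX] := ideal_in_F X r FX Xr.
  right.
  split; last 2 first.
  - by move=> [Y FY Y1]; have [_ + _] := ideal_in_F Y 1 FY Y1.
  - by move=> s Js; exists X => //; apply: JX.
  split; first by exists X.
  - move=> a b [A FA Aa] [B FB Bb].
    have [AB|BA] := Ftot A B FA FB.
    + have [[_ BD _] _ _] := ideal_in_F B b FB Bb.
      by exists B => //; apply: BD => //; apply: AB.
    + have [[_ AD _] _ _] := ideal_in_F A a FA Aa.
      by exists A => //; apply: AD => //; apply: BA.
  - move=> s a [A FA Aa]; have [[_ _ AM] _ _] := ideal_in_F A a FA Aa.
    by exists A => //; apply: AM.
case: PA => [A0|[Aid A1 JA]].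
  exfalso; apply: (Amax J); last by rewrite /P; right; split.
  by have [J0 _ _] := Jid; rewrite A0; split=> [//|/(_ 0 J0)].
exists A => //; split=> // m' m'id m'1 Am' r m'r.
apply: contrapT => Ar; apply: (Amax m').
  by split=> // /(_ r m'r).
by rewrite /P; right; split=> // s /JA /Am'.
Qed.

Lemma maximal_idealP (m : R -> Prop) s :
  maximal_ideal m -> ~ m s -> exists u a, m u /\ 1 = u + a * s.
Proof.
move=> [[m0 mD mM] m1 mmax] ms.
pose m' t := exists u a, m u /\ t = u + a * s.
have m'id : is_ideal m'.
  split.
  - by exists 0, 0; rewrite mul0r addr0.
  - move=> _ _ [u1 [a1 [mu1 ->]]] [u2 [a2 [mu2 ->]]].
    exists (u1 + u2), (a1 + a2); split; first exact: mD.
    by rewrite mulrDl addrACA.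
  - move=> r _ [u [a [mu ->]]]; exists (r * u), (r * a); split; first exact: mM.
    by rewrite mulrDr mulrA.
apply: contrapT => m'1; apply: ms; apply: (mmax m') => //.
- by move=> r mr; exists r, 0; rewrite mul0r addr0.
- by exists 0, 1; rewrite add0r mul1r.
Qed.

End MaximalIdeals.

Section Submodules.
Variables (R : comNzRingType) (M : lmodType R).
Implicit Types (N K L S T : M -> Prop) (I : R -> Prop) (x y t : M).

Definition annR (N : M -> Prop) : R -> Prop := fun r => forall x, N x -> r *: x = 0.

Lemma annR_ideal N : is_ideal (annR N).
Proof.
split.
- by move=> z _; rewrite scale0r.
- by move=> a b Na Nb z Nz; rewrite scalerDl Na // Nb // addr0.
- by move=> r a Na z Nz; rewrite -scalerA Na // scaler0.
Qed.

Definition cyclic_sub (x : M) : M -> Prop := fun z => exists c, z = c *: x.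

Lemma cyclic_submodule x : is_submodule (cyclic_sub x).
Proof.
split.
- by exists 0; rewrite scale0r.
- by move=> _ _ [a ->] [b ->]; exists (a + b); rewrite scalerDl.
- by move=> r _ [a ->]; exists (r * a); rewrite scalerA.
Qed.

Lemma cyclic_sub_id x : cyclic_sub x x.
Proof. by exists 1; rewrite scale1r. Qed.

Lemma annM_submodule (I : R -> Prop) : is_submodule (@annM R M I).
Proof.
split.
- by move=> r _; rewrite scaler0.
- by move=> x y Hx Hy r Ir; rewrite scalerDr Hx // Hy // addr0.
- by move=> c x Hx r Ir; rewrite scalerA mulrC -scalerA Hx // scaler0.
Qed.

Lemma sub_sum_submodule N K :
  is_submodule N -> is_submodule K -> is_submodule (sub_sum N K).
Proof.
move=> [N0 ND NZ] [K0 KD KZ]; split.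
- by exists 0, 0; rewrite addr0.
- move=> _ _ [x1 [y1 [N1 [K1 ->]]]] [x2 [y2 [N2 [K2 ->]]]].
  exists (x1 + x2), (y1 + y2); rewrite addrACA.
  by split; [exact: ND | split; [exact: KD|]].
- move=> r _ [x [y [Nx [Ky ->]]]]; exists (r *: x), (r *: y).
  by rewrite scalerDr; split; [exact: NZ | split; [exact: KZ|]].
Qed.

Lemma sub_suml N K : is_submodule K -> N `<=` sub_sum N K.
Proof. by move=> [K0 _ _] x Nx; exists x, 0; rewrite addr0. Qed.

Lemma sub_sumr N K : is_submodule N -> K `<=` sub_sum N K.
Proof. by move=> [N0 _ _] y Ky; exists 0, y; rewrite add0r. Qed.

Lemma minimal_sub_eq S T :
  minimal_submodule S -> minimal_submodule T -> S `<=` T -> sub_eq S T.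
Proof. by move=> [Ssub Snz _] [_ _ Tmin]; apply: Tmin. Qed.

Lemma minimal_cyclic S t :
  minimal_submodule S -> S t -> t <> 0 -> S `<=` cyclic_sub t.
Proof.
move=> [[_ _ SZ] _ Smin] St t0 s Ss.
apply: ((Smin _ (cyclic_submodule t) _ _) s).2 => //.
- by exists t; split=> //; apply: cyclic_sub_id.
- by move=> _ [c ->]; apply: SZ.
Qed.

Lemma minimal_annR_scale S a t :
  minimal_submodule S -> ~ annR S a -> S t -> t <> 0 -> a *: t <> 0.
Proof.
move=> Smin Sa St t0 at0; apply: Sa => s /(minimal_cyclic Smin St t0) [c ->].
by rewrite scalerA mulrC -scalerA at0 scaler0.
Qed.

Lemma minimal_annR_mul S a b :
  minimal_submodule S -> ~ annR S a -> ~ annR S b -> ~ annR S (a * b).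
Proof.
move=> Smin Sa Sb Sab; have [[_ _ SZ] [t [St t0]] _] := Smin.
have bt0 := minimal_annR_scale Smin Sb St t0.
by apply: (minimal_annR_scale Smin Sa (SZ b t St) bt0); rewrite scalerA Sab.
Qed.

Lemma minimal_annR_prod (I : finType) (P : pred I) (F : I -> R) S :
  minimal_submodule S -> (forall i, P i -> ~ annR S (F i)) ->
  ~ annR S (\prod_(i | P i) F i).
Proof.
move=> Smin SF; apply: (big_ind (fun r => ~ annR S r)) => //.
- by have [_ [t [St t0]] _] := Smin; move=> /(_ t St); rewrite scale1r.
- by move=> a b; apply: minimal_annR_mul.
Qed.

Lemma cyclic_minimal (m : R -> Prop) y :
  maximal_ideal m -> y <> 0 -> (forall r, m r -> r *: y = 0) ->
  minimal_submodule (cyclic_sub y).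
Proof.
move=> mmax y0 my; split; first exact: cyclic_submodule.
  by exists y; split; first exact: cyclic_sub_id.
move=> L [_ _ LZ] [w [Lw w0]] Ly z; split; first exact: Ly.
have [s ws] := Ly w Lw.
have ms : ~ m s by move=> /my sy; apply: w0; rewrite ws.
have [u [a [mu E1]]] := maximal_idealP mmax ms.
have ya : y = a *: w by rewrite -[y]scale1r E1 scalerDl my // add0r ws scalerA.
by move=> [c ->]; rewrite ya scalerA; apply: LZ.
Qed.

Lemma minimal_sub_large N S :
  is_submodule N -> large N -> minimal_submodule S -> S `<=` N.
Proof.
move=> [N0 ND NZ] Nlarge [[S0 SD SZ] Snz Smin].
have SN_sub : is_submodule (S `&` N).
  split=> //.
  - by move=> a b [Sa Na] [Sb Nb]; split; [apply: SD | apply: ND].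
  - by move=> r a [Sa Na]; split; [apply: SZ | apply: NZ].
have [z [Nz [Sz z0]]] := Nlarge S (And3 S0 SD SZ) Snz.
have SN_S : sub_eq (S `&` N) S by apply: Smin SN_sub _ _ => [|? []//]; exists z.
by move=> x /(SN_S x).2 [].
Qed.

Section Comultiplication.
Hypothesis hcomul : comultiplication M.

Lemma annM_annR_sub N : is_submodule N -> annM (annR N) `<=` N.
Proof.
move=> Nsub x Nx; have [I [_ NI]] := hcomul Nsub.
by apply/(NI x).2 => r Ir; apply: Nx => y /(NI y).1; apply.
Qed.

Lemma annR_separates_point N x :
  is_submodule N -> ~ N x -> exists2 a, annR N a & a *: x <> 0.
Proof.
move=> Nsub Nx; apply: contrapT => noa; apply: Nx; apply: annM_annR_sub => // r Nr.
by apply: contrapT => rx0; apply: noa; exists r.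
Qed.

Lemma annR_separates N S :
  is_submodule N -> ~ S `<=` N -> exists2 a, annR N a & ~ annR S a.
Proof.
move=> Nsub /existsPNP [x Sx Nx].
by have [a Na ax0] := annR_separates_point Nsub Nx; exists a => // /(_ x Sx).
Qed.

Lemma minimal_sub_sum N K S :
  is_submodule N -> is_submodule K -> minimal_submodule S ->
  S `<=` sub_sum N K -> S `<=` N \/ S `<=` K.
Proof.
move=> Nsub Ksub Smin SNK.
have [SN|SN] := pselect (S `<=` N); [by left | right].
apply: contrapT => SK.
have [a Na Sa] := annR_separates Nsub SN.
have [b Kb Sb] := annR_separates Ksub SK.
apply: (minimal_annR_mul Smin Sa Sb) => s /SNK [x [y [Nx [Ky ->]]]].
by rewrite scalerDr mulrC -scalerA Na // scaler0 add0r mulrC -scalerA Kb // scaler0.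
Qed.

Lemma exists_minimal_sub N :
  is_submodule N -> nonzero_sub N -> exists2 S, minimal_submodule S & S `<=` N.
Proof.
move=> [_ _ NZ] [x [Nx x0]].
have x_ann1 : ~ annR (cyclic_sub x) 1.
  by move=> /(_ x (cyclic_sub_id x)); rewrite scale1r.
have [m mmax ann_m] := exists_maximal_ideal (annR_ideal _) x_ann1.
have [[m0 mD mM] m1 _] := mmax.
pose L z := exists2 r, m r & z = r *: x.
have Lsub : is_submodule L.
  split.
  - by exists 0; rewrite ?scale0r.
  - by move=> _ _ [a ma ->] [b mb ->]; exists (a + b); [apply: mD | rewrite scalerDl].
  - by move=> r _ [a ma ->]; exists (r * a); [apply: mM | rewrite scalerA].
(* [x] is not in [m x], otherwise [1 - r] would lie in [Ann(x)], inside [m]. *)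
have Lx : ~ L x.
  move=> [r mr xr]; apply: m1; rewrite -(subrK r 1); apply: mD => //.
  apply: ann_m => _ [c ->].
  by rewrite scalerA mulrC -scalerA scalerBl scale1r -xr subrr scaler0.
have [i Li ix0] := annR_separates_point Lsub Lx.
exists (cyclic_sub (i *: x)).
  apply: (cyclic_minimal mmax ix0) => r mr.
  by rewrite scalerA mulrC -scalerA Li //; exists r.
by move=> _ [c ->]; apply: NZ (NZ _ _ Nx).
Qed.

Lemma large_of_minimal_sub N :
  (forall S, minimal_submodule S -> S `<=` N) -> large N.
Proof.
move=> minN L Lsub Lnz.
have [S Smin SL] := exists_minimal_sub Lsub Lnz.
have [_ [z [Sz z0]] _] := Smin.
by exists z; split; [apply: minN Smin z Sz | split; [apply: SL|]].
Qed.

Lemma not_large_misses_minimal N :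
  ~ large N -> exists2 S, minimal_submodule S & ~ S `<=` N.
Proof.
move=> Nlarge; apply: contrapT => noS; apply: Nlarge; apply: large_of_minimal_sub.
by move=> S Smin; apply: contrapT => SN; apply: noS; exists S.
Qed.

End Comultiplication.
End Submodules.

Section EnumeratedMinimalSubmodules.
Variables (R : comNzRingType) (M : lmodType R) (n : nat) (g : 'I_n -> M -> Prop).
Hypotheses (hcomul : comultiplication M)
  (g_min : forall i, minimal_submodule (g i))
  (g_all : forall S, minimal_submodule S -> exists i, sub_eq S (g i))
  (g_inj : forall i j, sub_eq (g i) (g j) -> i = j).

Lemma g_sub_inj i j : g i `<=` g j -> i = j.
Proof. by move=> gij; apply/g_inj/minimal_sub_eq. Qed.

Lemma not_large_misses_g (N : M -> Prop) : ~ large N -> exists i, ~ g i `<=` N.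
Proof.
move=> /(not_large_misses_minimal hcomul) [S Smin SN].
by have [i Si] := g_all Smin; exists i => giN; apply: SN => x /(Si x).1 /giN.
Qed.

Lemma lsg_independent_le k (f : 'I_k -> M -> Prop) :
  lsg_independent f -> (k <= n)%N.
Proof.
move=> [f_vertex f_neq f_nadj].
have /choice [c fc] : forall i, exists j, ~ g j `<=` f i.
  by move=> i; have [_ _ /not_large_misses_g] := f_vertex i.
suff c_inj : injective c by have := leq_card c c_inj; rewrite !card_ord.
move=> i j cij; have [//|ij] := eqVneq i j; exfalso.
have [fi_sub _ _] := f_vertex i; have [fj_sub _ _] := f_vertex j.
have large_ij : large (sub_sum (f i) (f j)).
  by apply: contrapT => nl; apply: (f_nadj i j); split=> //; apply: f_neq.
have := minimal_sub_large (sub_sum_submodule fi_sub fj_sub) large_ij (g_min (c i)).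
case/(minimal_sub_sum hcomul fi_sub fj_sub (g_min (c i))); first exact: fc.
by rewrite cij; apply: fc.
Qed.

Definition kill_others i : R -> Prop := fun r => forall j, j != i -> annR (g j) r.

Definition span_others i : M -> Prop := annM (kill_others i).

Lemma g_sub_span_others i j : j != i -> g j `<=` span_others i.
Proof. by move=> ji x gx r /(_ j ji); apply. Qed.

Lemma separating_scalar i : exists2 r, kill_others i r & ~ annR (g i) r.
Proof.
have /choice [a Ha] : forall j, exists a, j != i -> annR (g j) a /\ ~ annR (g i) a.
  move=> j; have [->|ji] := eqVneq j i; first by exists 0.
  have [gj_sub _ _] := g_min j.
  have gij : ~ g i `<=` g j by move=> /g_sub_inj ij; rewrite ij eqxx in ji.
  by have [b gjb gib] := annR_separates hcomul gj_sub gij; exists b.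
exists (\prod_(j | j != i) a j).
  move=> j ji x gx; rewrite (bigD1 j) //= mulrC -scalerA.
  by have [aj _] := Ha j ji; rewrite aj // scaler0.
by apply: minimal_annR_prod (g_min i) _ => j /Ha [].
Qed.

Lemma g_not_sub_span_others i : ~ g i `<=` span_others i.
Proof.
have [r kr gir] := separating_scalar i.
by move=> gi; apply: gir => x /gi /(_ r kr).
Qed.

Hypothesis hnonnull : lsg_nonnull M.

Lemma exists_other_index (i : 'I_n) : exists j, j != i.
Proof.
have [V [_ [[Vsub Vnz Vnl] _ _ _]]] := hnonnull.
have [S Smin SV] := exists_minimal_sub hcomul Vsub Vnz.
have [t0 St0] := g_all Smin; have [t1 gt1] := not_large_misses_g Vnl.
have t01 : t0 != t1.
  by apply/eqP => t01; apply: gt1; rewrite -t01 => x /(St0 x).2 /SV.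
have [->|it0] := eqVneq i t0; first by exists t1; rewrite eq_sym.
by exists t0; rewrite eq_sym.
Qed.

Lemma span_others_vertex i : lsg_vertex (span_others i).
Proof.
split; first exact: annM_submodule.
- have [j ji] := exists_other_index i; have [_ [x [gx x0]] _] := g_min j.
  by exists x; split=> //; apply: g_sub_span_others gx.
- move=> large_i; apply: (g_not_sub_span_others (i := i)).
  exact: minimal_sub_large (annM_submodule _ _) large_i (g_min i).
Qed.

Lemma span_others_independent : lsg_independent span_others.
Proof.
split; first exact: span_others_vertex.
  move=> i j ij eij; apply: (g_not_sub_span_others (i := j)) => x gx.
  by apply/(eij x).1; apply: g_sub_span_others gx; rewrite eq_sym.
move=> i j [_ _ neq nlarge]; apply: nlarge.
have ij : i != j by apply/eqP => eij; apply: neq => x; rewrite eij.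
have [sub_i _ _] := span_others_vertex i; have [sub_j _ _] := span_others_vertex j.
apply: (large_of_minimal_sub hcomul) => S /g_all [k Sk] x /(Sk x).1 gx.
have [ki|ki] := eqVneq k i.
  by apply: (sub_sumr sub_i); apply: g_sub_span_others gx; rewrite ki.
by apply: (sub_suml sub_j); apply: g_sub_span_others gx.
Qed.

End EnumeratedMinimalSubmodules.

Theorem theorem3p4 (R : comNzRingType) (M : lmodType R) (n : nat)
  (hcomul : comultiplication M)
  (hnz : exists m : M, m <> 0%R)
  (hnonnull : lsg_nonnull M)
  (hmin : min_card_eq M n) :
  lsg_independence_number_eq M n.
Proof.
(* [hnz] is implied by [hnonnull]. *)
have [g [g_min g_all g_inj]] := hmin.
split.
  exists (span_others g).
  exact: span_others_independent hcomul g_min g_all g_inj hnonnull.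
by move=> k f; apply: (lsg_independent_le hcomul g_min g_all).
Qed.
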